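(* Let $a$ be an unrestricted program constant. Let $A=p_A(\bar{ch},\bar y)$, $A_i=p_{A_i}(\bar{ch},\bar y)$, $C_i=p_{C_i}(\bar{ch},\bar y)$ ($i=1,2$) and $P=p_P(\bar{ch},\bar z)$ be atomic formulas, built from predicate symbols annotated with a (co)finite channel set $\bar{ch}$ and applied to vectors of variables, where $\bar y$ consists of trace variables. Let $\chi\equiv(A\wedge C_1\to A_2)\wedge(A\wedge C_2\to A_1)$. Then the formula $$[a]\{\mathit{true},\chi\}\mathit{true}\;\wedge\;[a]\{A_1\wedge A_2,\,C_1\wedge C_2\}P\;\to\;[a]\{A,\,C_1\wedge C_2\}P$$ is valid, i.e. true in every interpretation and state.
   Context: Setting (dLCHP). Variables and channels. $\mathcal V=\mathcal V_{\mathbb R}\cup\mathcal V_{\mathbb N}\cup\mathcal V_{\mathcal T}$ are real, integer and trace variables; $\Omega$ is the set of channel names. Traces and states. - A trace is a finite sequence of events $\langle ch,d,s\rangle$ with $ch\in\Omega$ and $d,s\in\mathbb R$. A recorded trace additionally tags each event with a trace variable. - $\epsilon$ is the empty trace; $\preceq$ is prefix and $\prec$ is strict prefix. - A state maps each variable to a value of its type. - $v\cdot\tau$ appends to each trace variable $h$ of state $v$ the subsequence of events of $\tau$ tagged with $h$. - $v\downarrow C$ projects the value of every trace variable onto the events with channel in $C$. Interpretations. An interpretation $I$ assigns relations to predicate symbols, and to the unrestricted program constant $a$ a prefix-closed set $[\![a]\!]^I$ of computations $(v,\tau,w)$ (state $v$, recorded trace $\tau$, final state $w$ or $\bot$) containing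 every $(v,\epsilon,\bot)$, with $v=w$ on trace variables. Prefix-closed means: if $(v,\tau,w)\in[\![a]\!]^I$ and $\tau'\preceq\tau$, then $(v,\tau',\bot)\in[\![a]\!]^I$. Formula semantics. - $I,v\models p(\bar{ch},\bar x)$ iff the values of $\bar x$ in $v\downarrow\bar{ch}$ lie in $I(p)$; propositional connectives are classical. - $I,v\models[a]\{A,C\}\psi$ iff for all $(v,\tau,w)\in[\![a]\!]^I$ both hold: - (commit) if $I,v\cdot\sigma\models A$ for all $\sigma\prec\tau$, then $I,v\cdot\tau\models C$; - (post) if $I,v\cdot\sigma\models A$ for all $\sigma\preceq\tau$ and $w\neq\bot$, then $I,w\cdot\tau\models\psi$. *)

From Stdlib Require Import Reals ZArith List.
Import ListNotations.
Set Implicit Arguments.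

Section DLCHP.
Variable Ch : Type.

Record event := Ev { ev_ch : Ch; ev_d : R; ev_s : R }.
Definition trace := list event.
(* recorded trace: each event tagged with a trace variable (named by nat) *)
Definition rtrace := list (event * nat).

Inductive var := VR (n : nat) | VN (n : nat) | VT (n : nat).
Definition is_trace_var (x : var) : Prop :=
  match x with VT _ => True | _ => False end.

Inductive val := valR (r : R) | valN (z : Z) | valT (t : trace).

Record state := St { sR : nat -> R; sN : nat -> Z; sT : nat -> trace }.

Definition eval_var (v : state) (x : var) : val :=
  match x with
  | VR n => valR (sR v n) | VN n => valN (sN v n) | VT n => valT (sT v n)
  end.

Definition app_tr (v : state) (tau : rtrace) : state :=
  St (sR v) (sN v)
     (fun h => sT v h ++ map fst (filter (fun e => Nat.eqb (snd e) h) tau)).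

Definition chset := Ch -> bool.
Definition proj (v : state) (C : chset) : state :=
  St (sR v) (sN v) (fun h => filter (fun e => C (ev_ch e)) (sT v h)).

Definition fin_or_cofin (C : chset) : Prop :=
  (exists l : list Ch, forall c, C c = true -> In c l) \/
  (exists l : list Ch, forall c, C c = false -> In c l).

Definition prefix (s t : rtrace) : Prop := exists r, t = s ++ r.
Definition sprefix (s t : rtrace) : Prop := prefix s t /\ s <> t.

(* formulas: predicate symbols and program constants are named by nat;
   the only programs are program constants *)
Inductive fml :=
| FTrue
| FAtom (p : nat) (C : chset) (xs : list var)
| FAnd (f g : fml)
| FImp (f g : fml)
| FBox (a : nat) (A C psi : fml).

Record interp := Interp {
  ipred : nat -> list val -> Prop;
  (* computations (v, tau, w) with w = None standing for bottom *)
  iprog : nat -> state -> rtrace -> option state -> Prop }.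

Definition wf_interp (I : interp) : Prop :=
  (forall a v, iprog I a v nil None) /\
  (forall a v tau w tau', iprog I a v tau w -> prefix tau' tau ->
      iprog I a v tau' None) /\
  (forall a v tau w, iprog I a v tau (Some w) -> forall h, sT w h = sT v h).

Fixpoint sat (I : interp) (v : state) (f : fml) {struct f} : Prop :=
  match f with
  | FTrue => True
  | FAtom p C xs => ipred I p (map (eval_var (proj v C)) xs)
  | FAnd f g => sat I v f /\ sat I v g
  | FImp f g => sat I v f -> sat I v g
  | FBox a A C psi =>
      forall tau w, iprog I a v tau w ->
        ((forall sg, sprefix sg tau -> sat I (app_tr v sg) A) ->
            sat I (app_tr v tau) C) /\
        ((forall sg, prefix sg tau -> sat I (app_tr v sg) A) ->
            forall w', w = Some w' -> sat I (app_tr w' tau) psi)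
  end.

Definition valid (f : fml) : Prop :=
  forall I, wf_interp I -> forall v, sat I v f.

End DLCHP.

(* Fix a computation (v, tau, w) of a.  Along the prefixes s of tau the first
   box yields chi, i.e. A /\ C1 -> A2 and A /\ C2 -> A1, and the second box
   yields the commitments C1 /\ C2 at s whenever A1 /\ A2 held at all strict
   prefixes of s.  By well-founded induction on the strict-prefix order,
   assuming only A at all strict prefixes of s already gives C1 /\ C2 at s,
   and then A1 /\ A2 at s as soon as A holds at s itself; this feeds the
   postcondition clause of the second box. *)
From Stdlib Require Import Reals ZArith List Lia Wellfounded.

Section PrefixOrder.
Context {Ch : Type}.

Lemma prefix_refl (s : rtrace Ch) : prefix s s.
Proof. exists nil. now rewrite app_nil_r. Qed.

Lemma prefix_trans {r s t : rtrace Ch} : prefix r s -> prefix s t -> prefix r t.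
Proof. intros [q1 ->] [q2 ->]. exists (q1 ++ q2). now rewrite app_assoc. Qed.

Lemma sprefix_length {r s : rtrace Ch} : sprefix r s -> length r < length s.
Proof.
  intros [[q ->] Hne]. rewrite length_app.
  destruct q as [|e q].
  - rewrite app_nil_r in Hne. now contradiction Hne.
  - simpl. lia.
Qed.

Lemma sprefix_trans {r s t : rtrace Ch} : sprefix r s -> sprefix s t -> sprefix r t.
Proof.
  intros Hrs Hst. split.
  - exact (prefix_trans (proj1 Hrs) (proj1 Hst)).
  - intros ->. pose proof (sprefix_length Hrs). pose proof (sprefix_length Hst). lia.
Qed.

Lemma sprefix_wf : well_founded (@sprefix Ch).
Proof. exact (well_founded_lt_compat _ (@length _) _ (@sprefix_length)). Qed.

End PrefixOrder.

(* The circular reasoning step, abstracted from traces: positions form a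
   well-founded transitive order [lt], restricted to a downward closed
   domain [D] (the prefixes of one computation trace). *)
Section CircularReasoning.
Variables (T : Type) (lt : T -> T -> Prop).
Hypothesis lt_wf : well_founded lt.
Hypothesis lt_trans : forall {r s t}, lt r s -> lt s t -> lt r t.
Variable D : T -> Prop.
Hypothesis D_down : forall {r s}, lt r s -> D s -> D r.
Variables A A1 A2 C1 C2 : T -> Prop.
Hypothesis chi1 : forall s, D s -> A s -> C1 s -> A2 s.
Hypothesis chi2 : forall s, D s -> A s -> C2 s -> A1 s.
(* The commitment clause of the box with assumption A1 /\ A2. *)
Hypothesis commit : forall s, D s ->
  (forall r, lt r s -> A1 r /\ A2 r) -> C1 s /\ C2 s.

Lemma circular_commit (s : T) : D s ->
  (forall r, lt r s -> A r) -> C1 s /\ C2 s.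
Proof.
  induction s as [s IH] using (well_founded_ind lt_wf).
  intros Ds HA. apply commit; [exact Ds|].
  intros r Hr.
  assert (Dr : D r) by exact (D_down Hr Ds).
  assert (HC : C1 r /\ C2 r).
  { apply (IH r Hr Dr). intros q Hq. exact (HA q (lt_trans Hq Hr)). }
  assert (Ar : A r) by exact (HA r Hr).
  split; [apply chi2 | apply chi1]; tauto.
Qed.

Lemma circular_reasoning (s : T) : D s -> (forall r, lt r s -> A r) ->
  (C1 s /\ C2 s) /\ (A s -> A1 s /\ A2 s).
Proof.
  intros Ds HA. destruct (circular_commit s Ds HA) as [C1s C2s].
  split; [now split | intros As; split; [apply chi2 | apply chi1]; assumption].
Qed.

End CircularReasoning.

(* Prefix closure of programs: the commit clause of a box applies to every
   prefix of a computation, since that prefix is itself a computation. *)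
Lemma box_commit_prefix {Ch : Type} {I : interp Ch} (HI : wf_interp I)
  {a : nat} {A C psi : fml Ch} {v : state Ch} {tau s : rtrace Ch} {w} :
  sat I v (FBox a A C psi) -> iprog I a v tau w -> prefix s tau ->
  (forall r, sprefix r s -> sat I (app_tr v r) A) -> sat I (app_tr v s) C.
Proof.
  destruct HI as [_ [Hclosed _]].
  intros Hbox Htau Hs. exact (proj1 (Hbox s None (Hclosed _ _ _ _ _ Htau Hs))).
Qed.

(* The theorem for arbitrary formulas in place of the atoms. *)
Lemma box_circular_ag {Ch : Type} {I : interp Ch} (HI : wf_interp I) {a : nat}
  {A A1 A2 C1 C2 P : fml Ch} {v : state Ch} :
  sat I v (FBox a (FTrue Ch)
             (FAnd (FImp (FAnd A C1) A2) (FImp (FAnd A C2) A1)) (FTrue Ch)) ->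
  sat I v (FBox a (FAnd A1 A2) (FAnd C1 C2) P) ->
  sat I v (FBox a A (FAnd C1 C2) P).
Proof.
  intros Hchi HAC tau w Htau.
  set (at_ f s := sat I (app_tr v s) f).
  assert (chi : forall s, prefix s tau ->
            (at_ A s /\ at_ C1 s -> at_ A2 s) /\ (at_ A s /\ at_ C2 s -> at_ A1 s)).
  { intros s Hs. apply (box_commit_prefix HI Hchi Htau Hs). now intros. }
  assert (down : forall r s, sprefix r s -> prefix s tau -> prefix r tau).
  { intros r s Hr Hs. exact (prefix_trans (proj1 Hr) Hs). }
  assert (commit : forall s, prefix s tau ->
            (forall r, sprefix r s -> at_ A1 r /\ at_ A2 r) -> at_ C1 s /\ at_ C2 s).
  { intros s Hs. exact (box_commit_prefix HI HAC Htau Hs). }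
  assert (Hcirc := @circular_reasoning _ _ (@sprefix_wf Ch) (@sprefix_trans Ch)
    _ down (at_ A) (at_ A1) (at_ A2) (at_ C1) (at_ C2)
    (fun s Ds As C1s => proj1 (chi s Ds) (conj As C1s))
    (fun s Ds As C2s => proj2 (chi s Ds) (conj As C2s)) commit).
  split.
  - intros HA. exact (proj1 (Hcirc tau (prefix_refl tau) HA)).
  - intros HA. apply (proj2 (HAC tau w Htau)).
    intros s Hs.
    assert (HAs : forall r, sprefix r s -> at_ A r).
    { intros r Hr. exact (HA r (down r s Hr Hs)). }
    exact (proj2 (Hcirc s Hs HAs) (HA s Hs)).
Qed.

Theorem theorem3 (Ch : Type) (a : nat)
  (pA pA1 pA2 pC1 pC2 pP : nat)
  (chA chA1 chA2 chC1 chC2 chP : chset Ch)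
  (yA yA1 yA2 yC1 yC2 zP : list (var))
  (hchA : fin_or_cofin chA) (hchA1 : fin_or_cofin chA1)
  (hchA2 : fin_or_cofin chA2) (hchC1 : fin_or_cofin chC1)
  (hchC2 : fin_or_cofin chC2) (hchP : fin_or_cofin chP)
  (hyA : Forall is_trace_var yA) (hyA1 : Forall is_trace_var yA1)
  (hyA2 : Forall is_trace_var yA2) (hyC1 : Forall is_trace_var yC1)
  (hyC2 : Forall is_trace_var yC2) :
  let A := FAtom pA chA yA in
  let A1 := FAtom pA1 chA1 yA1 in
  let A2 := FAtom pA2 chA2 yA2 in
  let C1 := FAtom pC1 chC1 yC1 in
  let C2 := FAtom pC2 chC2 yC2 in
  let P := FAtom pP chP zP in
  let chi := FAnd (FImp (FAnd A C1) A2) (FImp (FAnd A C2) A1) in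
  valid (FImp (FAnd (FBox a (FTrue Ch) chi (FTrue Ch))
                    (FBox a (FAnd A1 A2) (FAnd C1 C2) P))
              (FBox a A (FAnd C1 C2) P)).
Proof.
  intros A A1 A2 C1 C2 P chi I HI v [Hchi HAC].
  exact (box_circular_ag HI Hchi HAC).
Qed.
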